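(* Let $X$ be a topological space, $\Gamma$ a family of curves in $X$, $(\mathcal S_n)$ a sequence of finite covers of $X$, and $q>p\ge1$. Suppose there is a sequence $\eta_n>0$ tending to $0$ with $\sup_{s\in\mathcal S_n}\mathrm{mod}_q(\Gamma(s),\mathcal S_n)\le\eta_n$ for all $n$. Then $$\lim_{n\to\infty}\frac{\mathrm{mod}_q(\Gamma,\mathcal S_n)}{\mathrm{mod}_p(\Gamma,\mathcal S_n)}=0.$$
   Context: Combinatorial modulus: for a cover $\mathcal S$ and $p\ge1$, admissible metrics are $\rho:\mathcal S\to[0,\infty)$ with $0<\sum_s\rho(s)^p<\infty$; $\ell_\rho(K)=\sum_{s\in\mathcal S,\ s\cap K\ne\emptyset}\rho(s)$; $V_p(\rho)=\sum_s\rho(s)^p$; $L_\rho(\Gamma,\mathcal S)=\inf_{\gamma\in\Gamma}\ell_\rho(\gamma)$; $\mathrm{mod}_p(\Gamma,\mathcal S)=\inf_\rho V_p(\rho)/L_\rho(\Gamma,\mathcal S)^p$. $\Gamma(s)$ is the set of curves of $\Gamma$ meeting $s$. *)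

From Stdlib Require Import Reals List Classical ClassicalEpsilon.
Open Scope R_scope.

Record topology (X : Type) := {
  is_open : (X -> Prop) -> Prop;
  open_empty : is_open (fun _ => False);
  open_full : is_open (fun _ => True);
  open_inter : forall U V, is_open U -> is_open V -> is_open (fun x => U x /\ V x);
  open_union : forall F : (X -> Prop) -> Prop,
      (forall U, F U -> is_open U) -> is_open (fun x => exists U, F U /\ U x)
}.
Arguments is_open {X} _ _.

(* A curve in X: a continuous map [0,1] -> X (represented by a map R -> X
   whose restriction to [0,1] is continuous; values outside [0,1] are ignored). *)
Definition is_curve {X : Type} (T : topology X) (g : R -> X) : Prop :=
  forall U, is_open T U -> forall t, 0 <= t <= 1 -> U (g t) ->
    exists d, 0 < d /\ forall t', 0 <= t' <= 1 -> Rabs (t' - t) < d -> U (g t').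

Definition meets {X : Type} (s : X -> Prop) (g : R -> X) : Prop :=
  exists t, 0 <= t <= 1 /\ s (g t).

Definition finite_cover {X : Type} (S : list (X -> Prop)) : Prop :=
  NoDup S /\ forall x : X, exists s, In s S /\ s x.

Definition rpow (x p : R) : R := if Rle_dec x 0 then 0 else Rpower x p.

(* Infimum of a set of reals (0 if it has no greatest lower bound). *)
Definition is_glb (E : R -> Prop) (m : R) : Prop :=
  (forall x, E x -> m <= x) /\ (forall b, (forall x, E x -> b <= x) -> b <= m).

Definition Rinf (E : R -> Prop) : R :=
  match excluded_middle_informative (exists m, is_glb E m) with
  | left H => proj1_sig (constructive_indefinite_description _ H)
  | right _ => 0
  end.

Definition ell {X : Type} (S : list (X -> Prop)) (rho : (X -> Prop) -> R)
  (g : R -> X) : R :=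
  fold_right (fun s acc =>
    (if excluded_middle_informative (meets s g) then rho s else 0) + acc) 0 S.

Definition Vp {X : Type} (p : R) (S : list (X -> Prop)) (rho : (X -> Prop) -> R) : R :=
  fold_right (fun s acc => rpow (rho s) p + acc) 0 S.

(* Admissible metrics: rho >= 0 on S, 0 < V_p(rho) (< oo automatically). *)
Definition admissible {X : Type} (p : R) (S : list (X -> Prop))
  (rho : (X -> Prop) -> R) : Prop :=
  (forall s, In s S -> 0 <= rho s) /\ 0 < Vp p S rho.

Definition Lrho {X : Type} (Gam : (R -> X) -> Prop) (S : list (X -> Prop))
  (rho : (X -> Prop) -> R) : R :=
  Rinf (fun v => exists g, Gam g /\ v = ell S rho g).

(* mod_p(Gamma, S) = inf_rho V_p(rho) / L_rho^p.  Metrics with L_rho = 0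
   contribute +oo and are omitted; for empty Gamma, L_rho = +oo and mod = 0. *)
Definition modulus {X : Type} (p : R) (Gam : (R -> X) -> Prop)
  (S : list (X -> Prop)) : R :=
  if excluded_middle_informative (exists g, Gam g) then
    Rinf (fun v => exists rho, admissible p S rho /\ 0 < Lrho Gam S rho /\
                     v = Vp p S rho / rpow (Lrho Gam S rho) p)
  else 0.

Definition Gam_at {X : Type} (Gam : (R -> X) -> Prop) (s : X -> Prop) : (R -> X) -> Prop :=
  fun g => Gam g /\ meets s g.

(* Normalise an admissible metric [rho] for [Gamma] so that every curve has
   [rho]-length at least 1, fix a threshold [t > 0] and, for every set [s],
   a metric [sigma_s] with [V_q(sigma_s) <= 2 eta] making every curve through
   [s] long.  The metric [tau = max(rho 1_{rho <= t}, max_{rho(s) > t} sigma_s)]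
   still makes every curve of [Gamma] long: a curve either meets a set where
   [rho > t], or only sets where [tau >= rho].  Its q-volume is at most
   [sum_{rho <= t} rho^q + 2 eta #{rho > t} <= (t^(q-p) + 2 eta / t^p) V_p(rho)],
   so [mod_q <= (t^(q-p) + 2 eta / t^p) mod_p]; choosing [t^(q-p) = eps/2] and
   then [n] large makes the factor smaller than [eps]. *)
From Stdlib Require Import Reals List Lra Classical ClassicalEpsilon.
Open Scope R_scope.

Lemma is_glb_exists (E : R -> Prop) x b :
  E x -> (forall y, E y -> b <= y) -> exists m, is_glb E m.
Proof.
  intros Ex Eb.
  destruct (completeness (fun y => E (- y))) as [m [m_ub m_least]].
  - exists (- b); intros y Ey; specialize (Eb _ Ey); lra.
  - exists (- x); rewrite Ropp_involutive; exact Ex.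
  - exists (- m); split.
    + intros y Ey.
      assert (- y <= m) by (apply m_ub; rewrite Ropp_involutive; exact Ey).
      lra.
    + intros c Hc.
      assert (m <= - c) by (apply m_least; intros y Ey; specialize (Hc _ Ey); lra).
      lra.
Qed.

Lemma Rinf_is_glb (E : R -> Prop) x b :
  E x -> (forall y, E y -> b <= y) -> is_glb E (Rinf E).
Proof.
  intros Ex Eb; unfold Rinf; destruct (excluded_middle_informative _) as [H | H].
  - exact (proj2_sig (constructive_indefinite_description _ H)).
  - destruct (H (is_glb_exists E x b Ex Eb)).
Qed.

Lemma Rinf_le (E : R -> Prop) x b : (forall y, E y -> b <= y) -> E x -> Rinf E <= x.
Proof. intros Eb Ex; apply (Rinf_is_glb E x b); assumption. Qed.

Lemma Rinf_greatest (E : R -> Prop) x b : E x -> (forall y, E y -> b <= y) -> b <= Rinf E.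
Proof. intros Ex Eb; apply (Rinf_is_glb E x b); assumption. Qed.

Lemma Rinf_lt_witness (E : R -> Prop) x b c :
  E x -> (forall y, E y -> b <= y) -> Rinf E < c -> exists y, E y /\ y < c.
Proof.
  intros Ex Eb Hc; apply NNPP; intros Hnone.
  assert (c <= Rinf E); [|lra].
  apply (Rinf_greatest E x); [assumption|]; intros y Ey.
  destruct (Rlt_le_dec y c); [destruct Hnone; eauto | assumption].
Qed.

Lemma le_mul_Rinf (E : R -> Prop) x a c :
  E x -> 0 < c -> (forall v, E v -> a <= c * v) -> a <= c * Rinf E.
Proof.
  intros Ex Hc Ha.
  replace a with (c * (a / c)) by (field; lra).
  apply Rmult_le_compat_l; [lra|].
  apply (Rinf_greatest E x); [assumption|]; intros v Ev.
  apply (Rmult_le_reg_l c); [assumption|].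
  replace (c * (a / c)) with a by (field; lra); auto.
Qed.

Lemma Rpower_pos x p : 0 < Rpower x p.
Proof. apply exp_pos. Qed.

Lemma rpow_nonneg x p : 0 <= rpow x p.
Proof. unfold rpow; destruct (Rle_dec x 0); [lra | left; apply Rpower_pos]. Qed.

Lemma rpow_0 p : rpow 0 p = 0.
Proof. unfold rpow; destruct (Rle_dec 0 0); lra. Qed.

Lemma rpow_Rpower x p : 0 < x -> rpow x p = Rpower x p.
Proof. intros; unfold rpow; destruct (Rle_dec x 0); lra. Qed.

Lemma rpow_gt0 x p : 0 < x -> 0 < rpow x p.
Proof. intros; rewrite rpow_Rpower by assumption; apply Rpower_pos. Qed.

Lemma rpow_Rmax_le u v q : 0 <= u -> 0 <= v -> rpow (Rmax u v) q <= rpow u q + rpow v q.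
Proof.
  intros; pose proof (rpow_nonneg u q); pose proof (rpow_nonneg v q).
  unfold Rmax; destruct (Rle_dec u v); lra.
Qed.

Lemma rpow_div x L p : 0 <= x -> 0 < L -> rpow (x / L) p = rpow x p / rpow L p.
Proof.
  intros Hx HL; destruct (Req_dec x 0) as [-> | Hx0].
  - unfold Rdiv; rewrite Rmult_0_l, rpow_0; lra.
  - assert (0 < x / L) by (apply Rdiv_lt_0_compat; lra).
    rewrite !rpow_Rpower by lra; unfold Rdiv.
    rewrite <- Rpower_mult_distr by (try apply Rinv_0_lt_compat; lra).
    unfold Rpower at 2; rewrite ln_Rinv, Ropp_mult_distr_r_reverse, exp_Ropp by lra.
    reflexivity.
Qed.

Lemma rpow_ge1 L q : 1 <= L -> 0 <= q -> 1 <= rpow L q.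
Proof.
  intros; rewrite rpow_Rpower, <- (Rpower_O L) by lra.
  apply Rle_Rpower; assumption.
Qed.

Definition lsum {A : Type} (l : list A) (f : A -> R) : R :=
  fold_right (fun a acc => f a + acc) 0 l.

Definition lmax {A : Type} (l : list A) (f : A -> R) : R :=
  fold_right (fun a acc => Rmax (f a) acc) 0 l.

Section ListSums.

Context {A : Type}.
Implicit Types (l : list A) (f g : A -> R).

Lemma lsum_le l f g : (forall x, In x l -> f x <= g x) -> lsum l f <= lsum l g.
Proof.
  induction l as [|a l IH]; simpl; intros Hfg; [lra|].
  pose proof (Hfg a (or_introl eq_refl)).
  assert (lsum l f <= lsum l g) by (apply IH; auto).
  lra.
Qed.

Lemma lsum_ext l f g : (forall x, In x l -> f x = g x) -> lsum l f = lsum l g.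
Proof.
  intros Hfg; apply Rle_antisym; apply lsum_le; intros x Hx; rewrite Hfg; auto; lra.
Qed.

Lemma lsum_nonneg l f : (forall x, In x l -> 0 <= f x) -> 0 <= lsum l f.
Proof.
  induction l as [|a l IH]; simpl; intros Hf; [lra|].
  pose proof (Hf a (or_introl eq_refl)).
  assert (0 <= lsum l f) by (apply IH; auto).
  lra.
Qed.

Lemma lsum_ge_term l f x : (forall y, In y l -> 0 <= f y) -> In x l -> f x <= lsum l f.
Proof.
  induction l as [|a l IH]; simpl; intros Hf Hx; [destruct Hx|].
  pose proof (Hf a (or_introl eq_refl)).
  destruct Hx as [<- | Hx].
  - assert (0 <= lsum l f) by (apply lsum_nonneg; auto). lra.
  - assert (f x <= lsum l f) by (apply IH; auto). lra.
Qed.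

Lemma lsum_gt0_witness l f : 0 < lsum l f -> exists x, In x l /\ f x <> 0.
Proof.
  induction l as [|a l IH]; simpl; intros Hpos; [lra|].
  destruct (Req_dec (f a) 0) as [Ha | Ha]; [|eauto].
  destruct IH as [x [Hx Hfx]]; [lra | eauto].
Qed.

Lemma lsum0 l : lsum l (fun _ => 0) = 0.
Proof. induction l as [|a l IH]; simpl; [|rewrite IH]; lra. Qed.

Lemma lsumD l f g : lsum l (fun x => f x + g x) = lsum l f + lsum l g.
Proof. induction l as [|a l IH]; simpl; [|rewrite IH]; lra. Qed.

Lemma lsumZ l c f : lsum l (fun x => c * f x) = c * lsum l f.
Proof. induction l as [|a l IH]; simpl; [|rewrite IH]; lra. Qed.

Lemma lmax_ge l f x : In x l -> f x <= lmax l f.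
Proof.
  induction l as [|a l IH]; simpl; intros Hx; [destruct Hx|].
  destruct Hx as [<- | Hx]; [apply Rmax_l|].
  eapply Rle_trans; [apply IH; auto | apply Rmax_r].
Qed.

Lemma lmax_nonneg l f : 0 <= lmax l f.
Proof.
  induction l as [|a l IH]; simpl; [lra|].
  eapply Rle_trans; [apply IH | apply Rmax_r].
Qed.

Lemma rpow_lmax_le l f q :
  (forall x, In x l -> 0 <= f x) -> rpow (lmax l f) q <= lsum l (fun x => rpow (f x) q).
Proof.
  induction l as [|a l IH]; simpl; intros Hf; [rewrite rpow_0; lra|].
  pose proof (rpow_Rmax_le (f a) (lmax l f) q (Hf a (or_introl eq_refl)) (lmax_nonneg l f)).
  assert (rpow (lmax l f) q <= lsum l (fun x => rpow (f x) q)) by (apply IH; auto).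
  lra.
Qed.

End ListSums.

Lemma exchange_lsum {A B : Type} (l : list A) (k : list B) (F : A -> B -> R) :
  lsum l (fun x => lsum k (F x)) = lsum k (fun y => lsum l (fun x => F x y)).
Proof.
  induction l as [|a l IH]; simpl; [symmetry; apply lsum0|].
  rewrite IH; symmetry; apply lsumD.
Qed.

Section Metrics.

Context {X : Type}.
Implicit Types (S : list (X -> Prop)) (rho : (X -> Prop) -> R) (g : R -> X)
  (G : (R -> X) -> Prop).

Definition nonneg_on S rho := forall s, In s S -> 0 <= rho s.

Definition covers S := forall x : X, exists s, In s S /\ s x.

Lemma ell_lsum S rho g :
  ell S rho g = lsum S (fun s => if excluded_middle_informative (meets s g) then rho s else 0).
Proof. reflexivity. Qed.

Lemma Vp_lsum p S rho : Vp p S rho = lsum S (fun s => rpow (rho s) p).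
Proof. reflexivity. Qed.

Lemma ell_le S rho1 rho2 g :
  (forall s, In s S -> meets s g -> rho1 s <= rho2 s) -> ell S rho1 g <= ell S rho2 g.
Proof.
  intros H; rewrite !ell_lsum; apply lsum_le; intros s Hs.
  destruct (excluded_middle_informative _); [auto | lra].
Qed.

Lemma ell_nonneg S rho g : nonneg_on S rho -> 0 <= ell S rho g.
Proof.
  intros H; rewrite ell_lsum; apply lsum_nonneg; intros s Hs.
  destruct (excluded_middle_informative _); [auto | lra].
Qed.

Lemma ell_ge_meets S rho g s : nonneg_on S rho -> In s S -> meets s g -> rho s <= ell S rho g.
Proof.
  intros Hrho Hs Hm; rewrite ell_lsum.
  eapply Rle_trans; [|apply lsum_ge_term with (x := s); auto].
  - destruct (excluded_middle_informative _); [lra | contradiction].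
  - intros y Hy; destruct (excluded_middle_informative _); [auto | lra].
Qed.

Lemma ell_div S rho L g : ell S (fun s => rho s / L) g = ell S rho g / L.
Proof.
  rewrite !ell_lsum; unfold Rdiv; rewrite <- (Rmult_comm (/ L)), <- lsumZ.
  apply lsum_ext; intros s _; destruct (excluded_middle_informative _); lra.
Qed.

Lemma Vp_div p S rho L : nonneg_on S rho -> 0 < L ->
  Vp p S (fun s => rho s / L) = Vp p S rho / rpow L p.
Proof.
  intros Hrho HL; rewrite !Vp_lsum.
  rewrite (lsum_ext _ _ (fun s => / rpow L p * rpow (rho s) p)), lsumZ; [unfold Rdiv; lra|].
  intros s Hs; rewrite rpow_div by auto; unfold Rdiv; lra.
Qed.

Lemma Vp0 p S : Vp p S (fun _ => 0) = 0.
Proof.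
  rewrite Vp_lsum, (lsum_ext _ _ (fun _ => 0)); [apply lsum0 | intros; apply rpow_0].
Qed.

Lemma Vp_gt0 p S rho g : nonneg_on S rho -> 0 < ell S rho g -> 0 < Vp p S rho.
Proof.
  intros Hrho Hell; rewrite ell_lsum in Hell.
  destruct (lsum_gt0_witness _ _ Hell) as [s [Hs Hne]].
  destruct (excluded_middle_informative _); [|lra].
  rewrite Vp_lsum; eapply Rlt_le_trans; [|apply lsum_ge_term with (x := s); auto].
  - apply rpow_gt0; specialize (Hrho s Hs); lra.
  - intros; apply rpow_nonneg.
Qed.

Lemma Lrho_le_ell G S rho g : nonneg_on S rho -> G g -> Lrho G S rho <= ell S rho g.
Proof.
  intros Hrho Hg; unfold Lrho; apply (Rinf_le _ _ 0); [|eauto].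
  intros v [g' [_ ->]]; apply ell_nonneg; assumption.
Qed.

Lemma Lrho_greatest G S rho b : (exists g, G g) ->
  (forall g, G g -> b <= ell S rho g) -> b <= Lrho G S rho.
Proof.
  intros [g Hg] Hb; unfold Lrho; apply (Rinf_greatest _ (ell S rho g)); [eauto|].
  intros v [g' [Hg' ->]]; auto.
Qed.

Lemma covers_meets S g : covers S -> exists s, In s S /\ meets s g.
Proof.
  intros Hcov; destruct (Hcov (g 0)) as [s [Hs Hg0]].
  exists s; split; [|exists 0; split; [lra|]]; assumption.
Qed.

End Metrics.

Definition modulus_values {X : Type} (q : R) (G : (R -> X) -> Prop) (S : list (X -> Prop))
    (v : R) : Prop :=
  exists rho, admissible q S rho /\ 0 < Lrho G S rho /\
    v = Vp q S rho / rpow (Lrho G S rho) q.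

Section Modulus.

Context {X : Type} (q : R) (G : (R -> X) -> Prop) (S : list (X -> Prop)).

Lemma modulus_Rinf : (exists g, G g) -> modulus q G S = Rinf (modulus_values q G S).
Proof.
  intros HG; unfold modulus; destruct (excluded_middle_informative _); [reflexivity | contradiction].
Qed.

Lemma modulus_values_nonneg v : modulus_values q G S v -> 0 <= v.
Proof.
  intros [rho [[_ HV] [HL ->]]]; pose proof (rpow_gt0 _ q HL).
  apply Rle_mult_inv_pos; [lra | assumption].
Qed.

Lemma modulus_values_nonempty : (exists g, G g) -> covers S -> exists v, modulus_values q G S v.
Proof.
  intros [g Hg] Hcov.
  assert (HL : 1 <= Lrho G S (fun _ => 1)).
  { apply Lrho_greatest; [eauto|]; intros g' _.
    destruct (covers_meets S g' Hcov) as [s [Hs Hm]].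
    apply (ell_ge_meets S (fun _ => 1) g' s); auto; intros ? _; lra. }
  eexists; exists (fun _ => 1); split; [split|split; [lra | reflexivity]].
  - intros ? _; lra.
  - destruct (covers_meets S g Hcov) as [s [Hs Hm]].
    apply (Vp_gt0 q S _ g); [intros ? _; lra|].
    assert (1 <= ell S (fun _ => 1) g) by (apply (ell_ge_meets S _ g s); auto; intros ? _; lra).
    lra.
Qed.

Lemma modulus_nonneg : covers S -> 0 <= modulus q G S.
Proof.
  intros Hcov; unfold modulus; destruct (excluded_middle_informative _) as [HG | _]; [|lra].
  destruct (modulus_values_nonempty HG Hcov) as [v Hv].
  apply (Rinf_greatest _ v); [assumption | apply modulus_values_nonneg].
Qed.

Lemma modulus_values_normalize v : modulus_values q G S v ->
  exists r, nonneg_on S r /\ (forall g, G g -> 1 <= ell S r g) /\ Vp q S r = v.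
Proof.
  intros [rho [[Hrho _] [HL ->]]]; set (L := Lrho G S rho) in *.
  exists (fun s => rho s / L); split; [|split].
  - intros s Hs; apply Rle_mult_inv_pos; auto.
  - intros g Hg; rewrite ell_div.
    apply (Rmult_le_reg_r L); [assumption|]; unfold Rdiv; rewrite Rmult_assoc, Rinv_l by lra.
    pose proof (Lrho_le_ell G S rho g Hrho Hg) as Hle; fold L in Hle; lra.
  - apply Vp_div; assumption.
Qed.

Lemma modulus_le_Vp rho : 0 <= q -> (exists g, G g) -> nonneg_on S rho ->
  (forall g, G g -> 1 <= ell S rho g) -> modulus q G S <= Vp q S rho.
Proof.
  intros Hq HG Hrho Hlong.
  assert (HL : 1 <= Lrho G S rho) by (apply Lrho_greatest; assumption).
  assert (HLq : 1 <= rpow (Lrho G S rho) q) by (apply rpow_ge1; assumption).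
  assert (HV : 0 < Vp q S rho).
  { destruct HG as [g Hg]; apply (Vp_gt0 q S rho g Hrho).
    specialize (Hlong g Hg); lra. }
  rewrite modulus_Rinf by assumption.
  apply Rle_trans with (Vp q S rho / rpow (Lrho G S rho) q).
  - apply (Rinf_le _ _ 0); [apply modulus_values_nonneg|].
    exists rho; repeat split; auto; lra.
  - apply Rmult_le_reg_r with (rpow (Lrho G S rho) q); [lra|].
    unfold Rdiv; rewrite Rmult_assoc, Rinv_l by lra; nra.
Qed.

Lemma exists_long_metric_lt c : covers S -> modulus q G S < c ->
  exists rho, nonneg_on S rho /\ Vp q S rho < c /\ forall g, G g -> 1 <= ell S rho g.
Proof.
  intros Hcov Hc; destruct (classic (exists g, G g)) as [HG | HG].
  - rewrite modulus_Rinf in Hc by assumption.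
    destruct (modulus_values_nonempty HG Hcov) as [v0 Hv0].
    destruct (Rinf_lt_witness _ v0 0 c Hv0 modulus_values_nonneg Hc) as [v [Hv Hvc]].
    destruct (modulus_values_normalize v Hv) as [r [Hr [Hlong HV]]].
    exists r; rewrite HV; auto.
  - unfold modulus in Hc; destruct (excluded_middle_informative _); [contradiction|].
    exists (fun _ => 0); rewrite Vp0; repeat split; [intros ? _; lra | lra |].
    intros g Hg; destruct HG; eauto.
Qed.

End Modulus.

Lemma rpow_le_mul_small r t p q : 0 <= r <= t -> 0 < t -> 0 <= p <= q ->
  rpow r q <= Rpower t (q - p) * rpow r p.
Proof.
  intros Hr Ht Hpq; destruct (Req_dec r 0) as [-> | Hr0]; [rewrite !rpow_0; lra|].
  rewrite !rpow_Rpower by lra.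
  replace q with (q - p + p) at 1 by ring; rewrite Rpower_plus.
  apply Rmult_le_compat_r; [left; apply Rpower_pos|].
  apply Rle_Rpower_l; lra.
Qed.

Lemma const_le_mul_large c r t p : 0 <= c -> 0 < t < r -> 0 <= p ->
  c <= c / Rpower t p * rpow r p.
Proof.
  intros Hc Htr Hp; rewrite rpow_Rpower by lra.
  assert (Rpower t p <= Rpower r p) by (apply Rle_Rpower_l; lra).
  pose proof (Rpower_pos t p).
  unfold Rdiv; rewrite Rmult_assoc, <- (Rmult_1_r c) at 1.
  apply Rmult_le_compat_l; [assumption|].
  apply (Rmult_le_reg_l (Rpower t p)); [assumption|].
  rewrite <- Rmult_assoc, Rinv_r by lra; lra.
Qed.

Lemma threshold_split_le r t p q v : 0 <= r -> 0 < t -> 0 <= p <= q -> 0 <= v ->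
  rpow (if Rle_dec r t then r else 0) q + (if Rlt_dec t r then v else 0)
  <= (Rpower t (q - p) + v / Rpower t p) * rpow r p.
Proof.
  intros Hr Ht Hpq Hv; pose proof (Rpower_pos t p); pose proof (Rpower_pos t (q - p)).
  pose proof (rpow_nonneg r p).
  assert (0 <= v / Rpower t p)
    by (apply Rle_mult_inv_pos; assumption).
  rewrite Rmult_plus_distr_r; destruct (Rle_dec _ _), (Rlt_dec _ _); try lra.
  - assert (rpow r q <= Rpower t (q - p) * rpow r p) by (apply rpow_le_mul_small; lra).
    assert (0 <= v / Rpower t p * rpow r p) by (apply Rmult_le_pos; assumption).
    lra.
  - assert (v <= v / Rpower t p * rpow r p) by (apply const_le_mul_large; lra).
    assert (0 <= Rpower t (q - p) * rpow r p) by (apply Rmult_le_pos; lra).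
    rewrite rpow_0; lra.
Qed.

Section ThresholdMetric.

Context {X : Type} (Gam : (R -> X) -> Prop) (S : list (X -> Prop)) (p q t v : R).
Hypotheses (t_gt0 : 0 < t) (p_ge0 : 0 <= p) (p_le_q : p <= q) (v_ge0 : 0 <= v).

Variable r : (X -> Prop) -> R.
Hypothesis r_nonneg : nonneg_on S r.
Hypothesis r_long : forall g, Gam g -> 1 <= ell S r g.

Variable sigma : (X -> Prop) -> (X -> Prop) -> R.
Hypothesis sigma_nonneg : forall s, In s S -> nonneg_on S (sigma s).
Hypothesis sigma_volume : forall s, In s S -> Vp q S (sigma s) <= v.
Hypothesis sigma_long : forall s g, In s S -> Gam g -> meets s g -> 1 <= ell S (sigma s) g.

Let small x := if Rle_dec (r x) t then r x else 0.
Let patch s x := if Rlt_dec t (r s) then sigma s x else 0.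

Definition threshold_metric x := Rmax (small x) (lmax S (fun s => patch s x)).

Lemma patch_nonneg s x : In s S -> In x S -> 0 <= patch s x.
Proof. intros Hs Hx; unfold patch; destruct (Rlt_dec _ _); [apply sigma_nonneg | lra]; auto. Qed.

Lemma threshold_metric_nonneg : nonneg_on S threshold_metric.
Proof.
  intros x Hx; eapply Rle_trans; [|apply Rmax_l].
  unfold small; destruct (Rle_dec _ _); [apply r_nonneg; assumption | lra].
Qed.

Lemma threshold_metric_long g : Gam g -> 1 <= ell S threshold_metric g.
Proof.
  intros Hg; destruct (classic (exists s, In s S /\ meets s g /\ t < r s))
    as [[s [Hs [Hm Hts]]] | Hsmall].
  - eapply Rle_trans; [apply (sigma_long s g); assumption|].
    apply ell_le; intros x Hx _; eapply Rle_trans; [|apply Rmax_r].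
    eapply Rle_trans; [|apply lmax_ge with (x := s); assumption].
    unfold patch; destruct (Rlt_dec _ _); [lra | contradiction].
  - eapply Rle_trans; [apply (r_long g Hg)|].
    apply ell_le; intros x Hx Hm; eapply Rle_trans; [|apply Rmax_l].
    unfold small; destruct (Rle_dec _ _) as [| Hxt]; [lra|].
    destruct Hsmall; exists x; repeat split; auto; lra.
Qed.

Lemma threshold_metric_volume :
  Vp q S threshold_metric <= (Rpower t (q - p) + v / Rpower t p) * Vp p S r.
Proof.
  rewrite !Vp_lsum.
  apply Rle_trans with
    (lsum S (fun x => rpow (small x) q + lsum S (fun s => rpow (patch s x) q))).
  { apply lsum_le; intros x Hx; unfold threshold_metric.
    assert (Hsmall : 0 <= small x)
      by (unfold small; destruct (Rle_dec _ _); [apply r_nonneg; auto | lra]).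
    pose proof (rpow_Rmax_le (small x) _ q Hsmall (lmax_nonneg S (fun s => patch s x))).
    pose proof (rpow_lmax_le S (fun s => patch s x) q (fun s Hs => patch_nonneg s x Hs Hx)).
    lra. }
  rewrite lsumD, exchange_lsum, <- lsumD, <- lsumZ.
  apply lsum_le; intros x Hx; unfold small.
  eapply Rle_trans; [|apply threshold_split_le; auto].
  apply Rplus_le_compat_l; unfold patch; destruct (Rlt_dec _ _); [apply sigma_volume; assumption|].
  rewrite (lsum_ext _ _ (fun _ => 0)), lsum0; [lra | intros; apply rpow_0].
Qed.

Lemma modulus_le_threshold_bound : (exists g, Gam g) ->
  modulus q Gam S <= (Rpower t (q - p) + v / Rpower t p) * Vp p S r.
Proof.
  intros HG; eapply Rle_trans; [|apply threshold_metric_volume].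
  apply modulus_le_Vp; [lra | assumption | apply threshold_metric_nonneg |].
  apply threshold_metric_long.
Qed.

End ThresholdMetric.

Lemma exists_local_metrics {X : Type} (Gam : (R -> X) -> Prop) (S : list (X -> Prop)) q eta :
  covers S -> 0 < eta -> (forall s, In s S -> modulus q (Gam_at Gam s) S <= eta) ->
  exists sigma : (X -> Prop) -> (X -> Prop) -> R,
    (forall s, In s S -> nonneg_on S (sigma s)) /\
    (forall s, In s S -> Vp q S (sigma s) <= 2 * eta) /\
    (forall s g, In s S -> Gam g -> meets s g -> 1 <= ell S (sigma s) g).
Proof.
  intros Hcov Heta Hloc.
  destruct (choice (fun s sig => In s S -> nonneg_on S sig /\ Vp q S sig <= 2 * eta /\
                                 forall g, Gam g -> meets s g -> 1 <= ell S sig g))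
    as [sigma Hsigma].
  - intros s; destruct (classic (In s S)) as [Hs | Hs]; [|exists (fun _ => 0); tauto].
    destruct (exists_long_metric_lt q (Gam_at Gam s) S (2 * eta) Hcov) as [sig [Hsig [HV Hlong]]].
    + specialize (Hloc s Hs); lra.
    + exists sig; intros _; repeat split; [assumption | lra |].
      intros g Hg Hm; apply Hlong; split; assumption.
  - exists sigma; repeat split; intros s; [intros Hs | intros Hs | intros g Hs]; apply (Hsigma s Hs).
Qed.

Lemma modulus_comparison {X : Type} (Gam : (R -> X) -> Prop) (S : list (X -> Prop)) p q t eta :
  0 < t -> 0 <= p <= q -> 0 < eta -> (exists g, Gam g) -> covers S ->
  (forall s, In s S -> modulus q (Gam_at Gam s) S <= eta) ->
  modulus q Gam S <= (Rpower t (q - p) + 2 * eta / Rpower t p) * modulus p Gam S.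
Proof.
  intros Ht Hpq Heta HG Hcov Hloc.
  destruct (exists_local_metrics Gam S q eta Hcov Heta Hloc)
    as [sigma [Hsigma_nonneg [Hsigma_volume Hsigma_long]]].
  destruct (modulus_values_nonempty p Gam S HG Hcov) as [v0 Hv0].
  rewrite (modulus_Rinf p) by assumption.
  apply (le_mul_Rinf _ v0); [assumption | |].
  - pose proof (Rpower_pos t (q - p)); pose proof (Rpower_pos t p).
    assert (0 < 2 * eta / Rpower t p) by (apply Rdiv_lt_0_compat; lra).
    lra.
  - intros v Hv; destruct (modulus_values_normalize p Gam S v Hv) as [r [Hr [Hlong <-]]].
    apply (modulus_le_threshold_bound Gam S p q t (2 * eta)) with (sigma := sigma);
      (lra || assumption).
Qed.

Lemma Rabs_div_le a b c : 0 <= a -> 0 <= b -> 0 <= c -> a <= c * b -> Rabs (a / b) <= c.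
Proof.
  intros Ha Hb Hc Habc; destruct (Req_dec b 0) as [-> | Hb0].
  - unfold Rdiv; rewrite Rinv_0, Rmult_0_r, Rabs_R0; assumption.
  - rewrite Rabs_right
      by (apply Rle_ge, Rle_mult_inv_pos; lra).
    apply (Rmult_le_reg_r b); [lra|].
    unfold Rdiv; rewrite Rmult_assoc, Rinv_l, Rmult_1_r by lra; lra.
Qed.

Theorem corollary4p10 (X : Type) (T : topology X) (Gam : (R -> X) -> Prop)
  (HGam : forall g, Gam g -> is_curve T g) (HGne : exists g, Gam g)
  (S : nat -> list (X -> Prop)) (HS : forall n, finite_cover (S n))
  (p q : R) (Hp : 1 <= p) (Hpq : p < q)
  (eta : nat -> R) (Heta_pos : forall n, 0 < eta n) (Heta_lim : Un_cv eta 0)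
  (Hsup : forall n, forall s, In s (S n) -> modulus q (Gam_at Gam s) (S n) <= eta n) :
  Un_cv (fun n => modulus q Gam (S n) / modulus p Gam (S n)) 0.
Proof.
  intros eps Heps.
  set (t := Rpower (eps / 2) (/ (q - p))).
  assert (Ht : 0 < t) by apply Rpower_pos.
  assert (Htq : Rpower t (q - p) = eps / 2).
  { unfold t; rewrite Rpower_mult, Rinv_l, Rpower_1 by lra; reflexivity. }
  pose proof (Rpower_pos t p) as Htp.
  destruct (Heta_lim (eps * Rpower t p / 4)) as [N HN].
  { apply Rdiv_lt_0_compat; [apply Rmult_lt_0_compat|]; lra. }
  exists N; intros n Hn; specialize (HN n Hn); pose proof (Heta_pos n).
  unfold R_dist in *; rewrite Rminus_0_r, Rabs_right in HN by lra; rewrite Rminus_0_r.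
  assert (Hcov : covers (S n)) by exact (proj2 (HS n)).
  pose proof (modulus_comparison Gam (S n) p q t (eta n) Ht ltac:(lra) (Heta_pos n) HGne Hcov
    (Hsup n)) as Hcomp.
  rewrite Htq in Hcomp.
  assert (2 * eta n / Rpower t p < eps / 2).
  { apply (Rmult_lt_reg_r (Rpower t p)); [assumption|].
    unfold Rdiv; rewrite Rmult_assoc, Rinv_l by lra; unfold Rdiv in HN; nra. }
  eapply Rle_lt_trans; [apply Rabs_div_le with (c := eps / 2 + 2 * eta n / Rpower t p) |].
  - apply modulus_nonneg; assumption.
  - apply modulus_nonneg; assumption.
  - assert (0 <= 2 * eta n / Rpower t p) by (apply Rlt_le, Rdiv_lt_0_compat; lra). lra.
  - exact Hcomp.
  - lra.
Qed.
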